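(* Let $R$ be a noetherian domain and let $I$ be a nonzero ideal of $R$. \begin{enumerate} \item If $J$ is a nonzero ideal of $R$ with $I \subseteq J$ and $J/I \cong R/P$ as $R$-modules for some prime ideal $P \subseteq R$, then $\omega'(I) \le \omega'(J)+1$. \item $\omega'(I) < \infty$. \item $\sup \mathsf L_{\mathcal I(R)}(I) \le \omega'(I)$. In particular, $\mathcal I(R)$ is a BF-monoid. \end{enumerate}
   Context: For a domain $R$, $\mathcal I(R)$ denotes the commutative semigroup of all nonzero ideals of $R$ under ideal multiplication (identity $R$). For a nonzero ideal $I$ of $R$, $\omega'(I) \in \mathbb N_0\cup\{\infty\}$ is the smallest $N$ with the property: whenever $n \in \mathbb N$ and $J_1,\dots,J_n \in \mathcal I(R)$ satisfy $J_1\cdots J_n \subseteq I$, there is a subset $\Omega \subseteq \{1,\dots,n\}$ with $|\Omega|\le N$ and $\prod_{\lambda\in\Omega}J_\lambda \subseteq I$ (the empty product being $R$). A monoid means a commutative semigroup $H$ with identity which is unit-cancellative: if $a,u\in H$ and $a=au$, then $u$ is invertible. $H^\times$ is the group of units. An atom is a non-unit $u$ such that $u=ab$ implies $a\in H^\times$ or $b\in H^\times$. For $a\in H$, $\mathsf L_H(a)\subseteq\mathbb N_0$ is the set of all $\ell$ such that $a=\varepsilon u_1\cdots u_\ell$ with $\varepsilon\in H^\times$ and atoms $u_1,\dots,u_\ell$. $H$ is a BF-monoid if it is unit-cancellative and $\mathsf L_H(a)$ is finite and nonempty for every $a\in H$. *)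

From HB Require Import structures.
From mathcomp Require Import all_boot all_order all_algebra.
From mathcomp Require Import boolp classical_sets.
Set Implicit Arguments.
Unset Strict Implicit.
Unset Printing Implicit Defensive.
Import Order.TTheory GRing.Theory Num.Theory.
Local Open Scope ring_scope.
Local Open Scope classical_set_scope.

Section Ideals.
Variable R : idomainType.

Definition is_ideal (I : set R) : Prop :=
  I 0 /\ (forall x y, I x -> I y -> I (x + y)) /\ (forall r x, I x -> I (r * x)).

Definition nonzero_ideal (I : set R) : Prop :=
  is_ideal I /\ exists x, x != 0 /\ I x.

Definition imul (I J : set R) : set R :=
  [set x | exists s : seq (R * R),
      (forall p, p \in s -> I p.1 /\ J p.2) /\ x = \sum_(p <- s) p.1 * p.2].

Definition iprod (s : seq (set R)) : set R := foldr imul setT s.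

Definition noetherian : Prop :=
  forall C : nat -> set R, (forall n, is_ideal (C n)) ->
    (forall n, C n `<=` C n.+1) -> exists m, forall n, (m <= n)%N -> C n = C m.

Definition prime_ideal (P : set R) : Prop :=
  is_ideal P /\ ~ P 1 /\ forall a b, P (a * b) -> P a \/ P b.

(* J/I ~= R/P as R-modules, written out as: there is an R-linear surjection
   f : J -> R/P (f represented by a map R -> R, values read modulo P)
   whose kernel is exactly I. *)
Definition quot_iso (J I P : set R) : Prop :=
  exists f : R -> R,
    (forall x y, J x -> J y -> P (f (x + y) - (f x + f y))) /\
    (forall r x, J x -> P (f (r * x) - r * f x)) /\
    (forall t, exists x, J x /\ P (f x - t)) /\
    (forall x, J x -> (P (f x) <-> I x)).

(* The property defining omega'(I) <= N. *)
Definition omega_bound (I : set R) (N : nat) : Prop :=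
  forall (n : nat) (Js : 'I_n -> set R), (forall i, nonzero_ideal (Js i)) ->
    iprod [seq Js i | i <- enum 'I_n] `<=` I ->
    exists Om : {set 'I_n}, (#|Om| <= N)%N /\ iprod [seq Js i | i <- enum Om] `<=` I.

Lemma omega_bound_ex (I : set R) :
  (exists N, omega_bound I N) -> exists N, `[< omega_bound I N >].
Proof. by move=> [N HN]; exists N; apply/asboolP. Qed.

(* omega'(I) in N_0 \cup {oo}, with None standing for oo. *)
Definition omega' (I : set R) : option nat :=
  match pselect (exists N, omega_bound I N) with
  | left H => Some (ex_minn (omega_bound_ex H))
  | right _ => None
  end.

Definition iunit (U : set R) : Prop :=
  nonzero_ideal U /\ exists V, nonzero_ideal V /\ imul U V = setT.

Definition iatom (U : set R) : Prop :=
  nonzero_ideal U /\ ~ iunit U /\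
  forall A B, nonzero_ideal A -> nonzero_ideal B -> U = imul A B -> iunit A \/ iunit B.

Definition in_lengths (A : set R) (l : nat) : Prop :=
  exists (e : set R) (s : seq (set R)),
    iunit e /\ (forall u, u \in s -> iatom u) /\ size s = l /\ A = imul e (iprod s).

Definition ideal_monoid_BF : Prop :=
  (forall A U, nonzero_ideal A -> nonzero_ideal U -> A = imul A U -> iunit U) /\
  (forall A, nonzero_ideal A ->
     (exists l, in_lengths A l) /\ (exists B, forall l, in_lengths A l -> (l <= B)%N)).

End Ideals.

Definition enat_le (a b : option nat) : Prop :=
  match b, a with
  | None, _ => True
  | Some _, None => False
  | Some m, Some k => (k <= m)%N
  end.

Definition enat_succ (a : option nat) : option nat := omap S a.

From HB Require Import structures.
From mathcomp Require Import all_boot all_order all_algebra all_fingroup.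
From mathcomp Require Import boolp classical_sets.
From mathcomp Require Import ring.
Local Open Scope classical_set_scope.

(* Part 1 is the "extension step": if J/I ~ R/P then
   P annihilates J/I and J/I has no P-torsion, so a factor of a product
   landing in I can be traded for one factor lying in P; hence
   omega'(I) <= omega'(J) + 1.  Part 2 follows by noetherian induction: for
   a proper ideal A choose x with (A : x) maximal among colon ideals; then
   (A : x) is prime and (A + Rx)/A ~ R/(A : x), so part 1 applies to the
   strictly larger ideal A + Rx.  Part 3 rests on a cancellation law
   A = AU ==> U = R for nonzero A, proved by the determinant trick on a finite
   generating set of A; it makes every factorisation into atoms irredundant,
   so its length is at most omega'(I), and together with existence of
   factorisations (noetherian induction again) shows that I(R) is BF. *)

Section IdealMonoid.
Import GRing.Theory.
Local Open Scope ring_scope.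
Context {R : idomainType}.
Implicit Types A B C I J P U : set R.
Implicit Types s t : seq (set R).

Lemma ideal0 A : is_ideal A -> A 0. Proof. by case. Qed.
Lemma idealD A : is_ideal A -> forall x y, A x -> A y -> A (x + y).
Proof. by case=> _ []. Qed.
Lemma idealM A : is_ideal A -> forall r x, A x -> A (r * x).
Proof. by case=> _ []. Qed.
Lemma idealMr A : is_ideal A -> forall r x, A x -> A (x * r).
Proof. by move=> hA r x hx; rewrite mulrC; apply: idealM. Qed.
Lemma idealN A : is_ideal A -> forall x, A x -> A (- x).
Proof. by move=> hA x hx; rewrite -mulN1r; apply: idealM. Qed.
Lemma idealB A : is_ideal A -> forall x y, A x -> A y -> A (x - y).
Proof. by move=> hA x y hx hy; apply: idealD => //; apply: idealN. Qed.
Lemma ideal_sum A (I : Type) (r : seq I) (P : pred I) (F : I -> R) :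
  is_ideal A -> (forall i, P i -> A (F i)) -> A (\sum_(i <- r | P i) F i).
Proof. by move=> hA hF; apply: (big_ind A) => //; [apply: ideal0|apply: idealD]. Qed.
Arguments ideal0 {A}.
Arguments idealD {A}.
Arguments idealM {A}.
Arguments idealMr {A}.
Arguments idealN {A}.
Arguments idealB {A}.

Lemma ideal1_T A : is_ideal A -> A 1 -> A = setT.
Proof.
by move=> hA h1; apply/seteqP; split=> // y _; rewrite -[y]mulr1; apply: idealM.
Qed.

Lemma nonzero_idealT : nonzero_ideal (@setT R).
Proof. by split=> //; exists 1; rewrite oner_neq0. Qed.

Lemma imul0 A B : imul A B 0.
Proof. by exists [::]; rewrite big_nil. Qed.

Lemma imulD A B x y : imul A B x -> imul A B y -> imul A B (x + y).
Proof.
move=> [s [hs ->]] [t [ht ->]]; exists (s ++ t); rewrite big_cat; split=> //.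
by move=> p; rewrite mem_cat => /orP [/hs|/ht].
Qed.

Lemma imul_in A B a b : A a -> B b -> imul A B (a * b).
Proof.
move=> ha hb; exists [:: (a, b)]; rewrite big_seq1; split=> // p.
by rewrite inE => /eqP ->.
Qed.
Arguments imul_in {A B a b}.

Lemma imul_least A B C : C 0 -> (forall x y, C x -> C y -> C (x + y)) ->
  (forall a b, A a -> B b -> C (a * b)) -> imul A B `<=` C.
Proof.
move=> h0 hD hab x [s [hs ->]]; elim: s hs => [|p s IH] hs; first by rewrite big_nil.
rewrite big_cons; apply: hD; last by apply: IH => q hq; apply: hs; rewrite inE hq orbT.
by have [] := hs p (mem_head _ _); apply: hab.
Qed.

Lemma imul_sub_ideal A B C : is_ideal C ->
  (forall a b, A a -> B b -> C (a * b)) -> imul A B `<=` C.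
Proof. by move=> hC; apply: imul_least; [apply: ideal0|apply: idealD]. Qed.

Lemma imul_ideal A B : is_ideal A -> is_ideal (imul A B).
Proof.
move=> hA; split; first exact: imul0; split; first exact: imulD.
move=> r x; apply: (imul_least _ _ [set x | imul A B (r * x)]).
- by rewrite /= mulr0; apply: imul0.
- by move=> y z /= hy hz; rewrite mulrDr; apply: imulD.
- by move=> a b ha hb /=; rewrite mulrA; apply: imul_in => //; apply: idealM.
Qed.

Lemma imulC A B : imul A B = imul B A.
Proof.
by apply/seteqP; split; apply: imul_least; (try exact: imul0); (try exact: imulD);
  move=> a b ha hb; rewrite mulrC; apply: imul_in.
Qed.

Lemma imulA A B C : imul (imul A B) C = imul A (imul B C).
Proof.
apply/seteqP; split.
- apply: imul_least; [exact: imul0|exact: imulD|] => x c hx hc.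
  move: x hx; apply: (imul_least _ _ [set x | imul A (imul B C) (x * c)]).
  + by rewrite /= mul0r; apply: imul0.
  + by move=> y z /= hy hz; rewrite mulrDl; apply: imulD.
  + by move=> a b ha hb /=; rewrite -mulrA; apply: imul_in => //; apply: imul_in.
- apply: imul_least; [exact: imul0|exact: imulD|] => a x ha hx.
  move: x hx; apply: (imul_least _ _ [set x | imul (imul A B) C (a * x)]).
  + by rewrite /= mulr0; apply: imul0.
  + by move=> y z /= hy hz; rewrite mulrDr; apply: imulD.
  + by move=> b c hb hc /=; rewrite mulrA; apply: imul_in => //; apply: imul_in.
Qed.

Lemma imul_subl A B : is_ideal A -> imul A B `<=` A.
Proof. by move=> hA; apply: imul_sub_ideal => // a b ha _; apply: idealMr. Qed.

Lemma imul_subr A B : is_ideal B -> imul A B `<=` B.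
Proof. by move=> hB; rewrite imulC; apply: imul_subl. Qed.

Lemma imulT A : is_ideal A -> imul A setT = A.
Proof.
move=> hA; apply/seteqP; split; first exact: imul_subl.
by move=> a ha; rewrite -[a]mulr1; apply: imul_in.
Qed.

Lemma imulTl A : is_ideal A -> imul setT A = A.
Proof. by move=> hA; rewrite imulC imulT. Qed.

Lemma imul_prime A B P : prime_ideal P -> imul A B `<=` P -> A `<=` P \/ B `<=` P.
Proof.
move=> [_ [_ hPab]] hsub; have [hAP|/nonsubset [a [ha haP]]] := pselect (A `<=` P).
  by left.
by right=> b hb; case: (hPab a b (hsub _ (imul_in ha hb))).
Qed.

Lemma iunit_T U : iunit U -> U = setT.
Proof.
move=> [[hU _] [V [_ e]]]; apply/seteqP; split=> // y _.
by apply: (imul_subl _ V hU); rewrite e.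
Qed.
Arguments iunit_T {U}.

Lemma iunitT : iunit (@setT R).
Proof.
split; first exact: nonzero_idealT.
by exists setT; split; [exact: nonzero_idealT|exact: imulT].
Qed.

Lemma iprod_ideal s : (forall u, u \in s -> is_ideal u) -> is_ideal (iprod s).
Proof.
elim: s => [|u s IH] hs //=; apply: imul_ideal; exact: hs (mem_head _ _).
Qed.

Lemma iprod_cat s t : (forall u, u \in t -> is_ideal u) ->
  iprod (s ++ t) = imul (iprod s) (iprod t).
Proof.
move=> ht; elim: s => [|u s IH] /=; first by rewrite imulTl //; apply: iprod_ideal.
by rewrite IH imulA.
Qed.

Section IndexedProducts.
Variables (T : eqType) (F : T -> set R).

Lemma iprod_rem x (t : seq T) : x \in t ->
  iprod (map F t) = imul (F x) (iprod (map F (rem x t))).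
Proof.
elim: t => [|y t IH] //; rewrite inE /= => xt.
case: eqP => [->|nyx] //=.
have xt' : x \in t by case/orP: xt => // /eqP hxy; case: nyx.
by rewrite (IH xt') -!imulA (imulC (F y)).
Qed.

Lemma iprod_perm (s t : seq T) : perm_eq s t -> iprod (map F s) = iprod (map F t).
Proof.
elim: s t => [|x s IH] t hst; first by move: (perm_size hst); case: t hst.
have xt : x \in t by rewrite -(perm_mem hst) mem_head.
rewrite (iprod_rem _ _ xt) /= (IH (rem x t)) //.
by rewrite -(perm_cons x); apply: perm_trans hst (perm_to_rem xt).
Qed.

Lemma iprod_prime (t : seq T) P : prime_ideal P -> iprod (map F t) `<=` P ->
  exists2 x, x \in t & F x `<=` P.
Proof.
move=> hP; elim: t => [|y t IH] /=; first by case: hP => _ [h1 _] /(_ 1 I).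
move=> /(imul_prime _ _ _ hP) [h|/IH [x hx h]]; first by exists y; rewrite ?mem_head.
by exists x; rewrite // inE hx orbT.
Qed.

Lemma iprod_sub_factor (t : seq T) x : is_ideal (F x) -> x \in t ->
  iprod (map F t) `<=` F x.
Proof. by move=> hx xt; rewrite (iprod_rem _ _ xt); apply: imul_subl. Qed.

End IndexedProducts.
Arguments iprod_perm {T F s t}.
Arguments iprod_prime {T F t P}.
Arguments iprod_sub_factor {T F t x}.

Lemma iprod_split n (Js : 'I_n -> set R) (Om : {set 'I_n}) :
  (forall i, is_ideal (Js i)) ->
  iprod [seq Js i | i <- enum 'I_n] =
  imul (iprod [seq Js i | i <- enum (~: Om)]) (iprod [seq Js i | i <- enum Om]).
Proof.
move=> hJs; rewrite -iprod_cat; last by move=> u /mapP [i _ ->].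
rewrite -map_cat; apply: iprod_perm; apply: uniq_perm; first exact: enum_uniq.
  rewrite cat_uniq !enum_uniq /= andbT; apply/hasPn => x.
  by rewrite !mem_enum inE => ->.
by move=> x; rewrite mem_cat !mem_enum !inE; case: (x \in Om).
Qed.

Lemma iprod_setU1 n (Js : 'I_n -> set R) (mu : 'I_n) (Om : {set 'I_n}) :
  mu \notin Om ->
  iprod [seq Js i | i <- enum (mu |: Om)] =
  imul (Js mu) (iprod [seq Js i | i <- enum Om]).
Proof.
move=> hmu; rewrite (@iprod_perm _ _ _ (mu :: enum Om)) //.
apply: uniq_perm; first exact: enum_uniq; first by rewrite /= mem_enum hmu enum_uniq.
by move=> x; rewrite mem_enum !inE mem_enum.
Qed.

Lemma omega'_le I N : omega_bound I N -> exists2 m, omega' I = Some m & (m <= N)%N.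
Proof.
move=> hN; rewrite /omega'; case: pselect => [H|H]; last by case: H; exists N.
by case: ex_minnP => m hm hmin; exists m => //; apply: hmin; apply/asboolP.
Qed.

Lemma omega'_bound I m : omega' I = Some m -> omega_bound I m.
Proof.
by rewrite /omega'; case: pselect => // H [<-]; case: ex_minnP => k /asboolP.
Qed.

Section QuotientByPrime.
Variables I J P : set R.
Hypotheses (hJ : is_ideal J) (hP : prime_ideal P) (hiso : quot_iso J I P).

Lemma quot_iso_ann p k : P p -> J k -> I (p * k).
Proof.
case: hiso => f [_ [fmul [_ fker]]] hp hk; have hPi := hP.1.
apply: (fker _ (idealM hJ p _ hk)).1.
by rewrite -[f _](subrK (p * f k)); apply: idealD => //; [apply: fmul|apply: idealMr].
Qed.

Lemma quot_iso_torsionfree m k : J k -> ~ I k -> I (m * k) -> P m.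
Proof.
case: hiso => f [_ [fmul [_ fker]]] hk hkI hmk; have [hPi [_ hprime]] := hP.
have fkP : ~ P (f k) by move/(fker _ hk).1.
have hmfk : P (m * f k).
  have hf : P (f (m * k)) := (fker _ (idealM hJ m _ hk)).2 hmk.
  have -> : m * f k = f (m * k) - (f (m * k) - m * f k) by rewrite opprB addrC subrK.
  by apply: idealB => //; apply: fmul.
by case: (hprime _ _ hmfk).
Qed.

End QuotientByPrime.

(* Part 1: if J/I ~ R/P then omega'(I) <= omega'(J) + 1.  From a product
   landing in I, first extract a subproduct K landing in J; if K is not
   already in I, the remaining factors multiply an element of K \ I into I,
   so their product lies in P and by primality one of them does; adding it
   to K gives a subproduct in I. *)
Lemma omega_bound_step I J P N : is_ideal I -> is_ideal J -> I `<=` J ->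
  prime_ideal P -> quot_iso J I P -> omega_bound J N -> omega_bound I N.+1.
Proof.
move=> hI hJ hIJ hP hiso hb n Js hJs hprod.
have hJs' i : is_ideal (Js i) := (hJs i).1.
have [Om [hOm hK]] := hb n Js hJs (subset_trans hprod hIJ).
set K := iprod _ in hK.
have [KI|/nonsubset [k [hk hkI]]] := pselect (K `<=` I).
  by exists Om; split=> //; apply: leqW.
set M := iprod [seq Js i | i <- enum (~: Om)].
have MP : M `<=` P.
  move=> m hm; apply: (quot_iso_torsionfree _ _ _ hJ hP hiso _ _ (hK _ hk) hkI).
  by apply: hprod; rewrite (iprod_split _ _ Om) //; apply: imul_in.
have [mu hmu hmuP] := iprod_prime hP MP.
have hmu' : mu \notin Om by move: hmu; rewrite mem_enum inE.
exists (mu |: Om); split; first by rewrite cardsU1 hmu' add1n ltnS.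
rewrite iprod_setU1 //; apply: imul_sub_ideal => // j k' hj hk'.
exact: (quot_iso_ann _ _ _ hJ hP hiso _ _ (hmuP _ hj) (hK _ hk')).
Qed.

Definition colon A (x : R) : set R := [set r | A (r * x)].

Lemma colon_ideal A x : is_ideal A -> is_ideal (colon A x).
Proof.
move=> hA; split; first by rewrite /colon /= mul0r; apply: ideal0.
split; first by move=> r s /= hr hs; rewrite /colon /= mulrDl; apply: idealD.
by move=> t r /= hr; rewrite /colon /= -mulrA; apply: idealM.
Qed.

Lemma colon_max_prime A x : is_ideal A -> ~ A x ->
  (forall y, ~ A y -> colon A x `<=` colon A y -> colon A x = colon A y) ->
  prime_ideal (colon A x).
Proof.
move=> hA hx hmax; split; first exact: colon_ideal.
split; first by rewrite /colon /= mul1r.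
move=> a b hab; have [hax|hax] := pselect (A (a * x)); first by left.
have hsub : colon A x `<=` colon A (a * x).
  by move=> r hr; rewrite /colon /= mulrA (mulrC r) -mulrA; apply: idealM.
by right; rewrite (hmax _ hax hsub) /colon /= mulrA (mulrC b).
Qed.

Definition adjoin A (x : R) : set R := [set y | exists r, A (y - r * x)].

Lemma adjoin_ideal A x : is_ideal A -> is_ideal (adjoin A x).
Proof.
move=> hA; split; first by exists 0; rewrite mul0r subr0; apply: ideal0.
split.
  move=> y z [r hr] [s hs]; exists (r + s).
  have -> : y + z - (r + s) * x = (y - r * x) + (z - s * x) by ring.
  exact: idealD.
move=> t y [r hr]; exists (t * r).
have -> : t * y - t * r * x = t * (y - r * x) by ring.
exact: idealM.
Qed.

Lemma sub_adjoin A x : A `<=` adjoin A x.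
Proof. by move=> y hy; exists 0; rewrite mul0r subr0. Qed.

Lemma adjoin_mem A x : is_ideal A -> adjoin A x x.
Proof. by move=> hA; exists 1; rewrite mul1r subrr; apply: ideal0. Qed.

(* (A + Rx)/A ~ R/(A : x) via y = a + r x |-> r. *)
Lemma adjoin_quot_iso A x : is_ideal A -> quot_iso (adjoin A x) A (colon A x).
Proof.
move=> hA; have hJ := adjoin_ideal A x hA.
pose f y := if pselect (adjoin A x y) is left H then sval (cid H) else 0.
have fP y : adjoin A x y -> A (y - f y * x).
  by rewrite /f; case: pselect => // H _; exact: svalP (cid H).
exists f; split; rewrite /colon /=.
  move=> y z hy hz.
  have -> : (f (y + z) - (f y + f z)) * x =
    (y - f y * x) + (z - f z * x) - (y + z - f (y + z) * x) by ring.
  exact: idealB hA _ _ (idealD hA _ _ (fP _ hy) (fP _ hz)) (fP _ (idealD hJ _ _ hy hz)).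
split.
  move=> r y hy.
  have -> : (f (r * y) - r * f y) * x =
    r * (y - f y * x) - (r * y - f (r * y) * x) by ring.
  exact: idealB hA _ _ (idealM hA r _ (fP _ hy)) (fP _ (idealM hJ r _ hy)).
split.
  move=> t; have ht : adjoin A x (t * x) by exists t; rewrite subrr; apply: ideal0.
  exists (t * x); split=> //.
  have -> : (f (t * x) - t) * x = - (t * x - f (t * x) * x) by ring.
  exact: idealN hA _ (fP _ ht).
move=> y hy; split=> h.
  have -> : y = (y - f y * x) + f y * x by ring.
  exact: idealD hA _ _ (fP _ hy) h.
have -> : f y * x = y - (y - f y * x) by ring.
exact: idealB hA _ _ h (fP _ hy).
Qed.

Definition gen (s : seq R) : set R :=
  [set y | exists c : 'I_(size s) -> R, y = \sum_(j < size s) c j * s`_j].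

Lemma sum_delta k (F : 'I_k -> R) (j : 'I_k) : \sum_(i < k) (j == i)%:R * F i = F j.
Proof.
rewrite (bigD1 j) //= eqxx mul1r big1 ?addr0 // => i hi.
by rewrite eq_sym (negbTE hi) mul0r.
Qed.

Lemma gen_ideal (s : seq R) : is_ideal (gen s).
Proof.
split; first by exists (fun _ => 0); rewrite big1 // => j _; rewrite mul0r.
split.
  move=> x y [c ->] [d ->]; exists (fun j => c j + d j); rewrite -big_split /=.
  by apply: eq_bigr => j _; rewrite mulrDl.
move=> r x [c ->]; exists (fun j => r * c j); rewrite mulr_sumr.
by apply: eq_bigr => j _; rewrite mulrA.
Qed.

Lemma gen_mem (s : seq R) (j : 'I_(size s)) : gen s s`_j.
Proof. by exists (fun i => (j == i)%:R); rewrite sum_delta. Qed.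

Lemma gen_sub (s : seq R) A : is_ideal A -> (forall j : 'I_(size s), A s`_j) ->
  gen s `<=` A.
Proof. by move=> hA hs y [c ->]; apply: ideal_sum => // j _; apply: idealM. Qed.

Lemma imul_gen U (s : seq R) : is_ideal U -> imul U (gen s) `<=`
  [set y | exists u : 'I_(size s) -> R,
             (forall j, U (u j)) /\ y = \sum_(j < size s) u j * s`_j].
Proof.
move=> hU; apply: imul_least.
- exists (fun _ => 0); split=> [_|]; first exact: ideal0.
  by rewrite big1 // => j _; rewrite mul0r.
- move=> x y [u [hu ->]] [w [hw ->]]; exists (fun j => u j + w j); split=> [j|].
    exact: idealD.
  by rewrite -big_split /=; apply: eq_bigr => j _; rewrite mulrDl.
- move=> b m hb [c ->]; exists (fun j => b * c j); split=> [j|]; first exact: idealMr.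
  by rewrite mulr_sumr; apply: eq_bigr => j _; rewrite mulrA.
Qed.

Lemma det_one_sub U k (X : 'M[R]_k) : is_ideal U -> (forall i j, U (X i j)) ->
  U (\det (1%:M - X) - 1).
Proof.
move=> hU hX; rewrite /determinant (bigD1 1%g) //= odd_perm1 expr0 mul1r addrAC.
apply: (idealD hU).
  apply: (big_ind (fun x => U (x - 1))).
  - by rewrite subrr; apply: ideal0.
  - move=> x y hx hy; have -> : x * y - 1 = x * (y - 1) + (x - 1) by ring.
    by apply: (idealD hU _ _ _ hx); apply: idealM.
  - move=> i _; rewrite perm1 !mxE eqxx /=.
    have -> : 1%:R - X i i - 1 = - X i i by ring.
    by apply: idealN.
apply: ideal_sum => // s hs.
have /existsP [i hi] : [exists i, s i != i].
  apply: contraR hs => /existsPn hfix; apply/eqP/permP => i.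
  by rewrite perm1; apply/eqP; move: (hfix i); rewrite negbK.
rewrite (bigD1 i) //=; apply: (idealM hU); apply: (idealMr hU).
by rewrite !mxE eq_sym (negbTE hi) add0r; apply: (idealN hU).
Qed.

Lemma det_trick U k (X : 'M[R]_k) (v : 'cV[R]_k) : is_ideal U ->
  (forall i j, U (X i j)) -> X *m v = v -> v != 0 -> U 1.
Proof.
move=> hU hX hXv v0.
have hv : (1%:M - X) *m v = 0 by rewrite mulmxBl mul1mx hXv subrr.
have : \det (1%:M - X) *: v = 0.
  by rewrite -mul_scalar_mx -mul_adj_mx -mulmxA hv mulmx0.
move/eqP; rewrite scalemx_eq0 (negbTE v0) orbF => /eqP hdet.
by have := det_one_sub _ _ _ hU hX; rewrite hdet sub0r => /(idealN hU); rewrite opprK.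
Qed.

Section Noetherian.
Hypothesis hN : noetherian R.

Lemma noeth_ind (Q : set R -> Prop) :
  (forall A, is_ideal A ->
     (forall B, is_ideal B -> A `<=` B -> A <> B -> Q B) -> Q A) ->
  forall A, is_ideal A -> Q A.
Proof.
move=> hstep A hA; have [//|nQ] := pselect (Q A); exfalso.
pose T := {X : set R | is_ideal X /\ ~ Q X}.
have step (X : T) : {Y : T | sval X `<=` sval Y /\ sval X <> sval Y}.
  case: X => X [hX nX]; apply: cid.
  have [[B [hB [hXB [hne nQB]]]]|hno] :=
    pselect (exists B, is_ideal B /\ X `<=` B /\ X <> B /\ ~ Q B).
    by exists (exist _ B (conj hB nQB)).
  case: nX; apply: hstep => // B hB hXB hne.
  by have [//|nQB] := pselect (Q B); case: hno; exists B.
pose g X := sval (step X).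
pose C n := sval (iter n g (exist _ A (conj hA nQ))).
have [m hm] := hN C (fun n => (svalP (iter n g _)).1)
  (fun n => (svalP (step (iter n g _))).1).
by apply: (svalP (step (iter m g _))).2; symmetry; apply: (hm m.+1).
Qed.

Lemma noeth_max (F : set R -> Prop) : (forall B, F B -> is_ideal B) ->
  forall A, F A -> exists M, F M /\ forall B, F B -> M `<=` B -> M = B.
Proof.
move=> hF A hA; have hAi := hF A hA; move: A hAi hA; apply: noeth_ind => A _ IH hA.
have [hmax|/existsNP [B /not_implyP [hFB /not_implyP [hAB hne]]]] :=
  pselect (forall B, F B -> A `<=` B -> A = B); first by exists A.
exact: IH B (hF B hFB) hAB hne hFB.
Qed.

(* If A = R the bound 0
   works; otherwise take x with (A : x) maximal among colon ideals, so that
   (A : x) is prime, and apply the extension step to A in A + Rx. *)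
Lemma omega_finite A : is_ideal A -> exists N, omega_bound A N.
Proof.
move: A; apply: (noeth_ind (fun A => exists N, omega_bound A N)) => A hA IH.
have [A1|A1] := pselect (A 1).
  exists 0%N => n Js _ _; exists finset.set0; rewrite cards0 enum_set0; split=> //=.
  by rewrite (ideal1_T _ hA A1).
pose Colons B := exists2 y, ~ A y & B = colon A y.
have hColons B : Colons B -> is_ideal B by case=> y _ ->; apply: colon_ideal.
have [_ [[x hx ->] hmax]] :=
  noeth_max _ hColons _ (ex_intro2 _ _ 1 A1 erefl : Colons (colon A 1)).
have hP : prime_ideal (colon A x).
  apply: colon_max_prime => // y hy; apply: hmax; exact: ex_intro2 _ _ y hy erefl.
have hAJ : A <> adjoin A x by move=> e; apply: hx; rewrite e; apply: adjoin_mem.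
have hJ := adjoin_ideal A x hA.
have [N hNJ] := IH _ hJ (sub_adjoin A x) hAJ.
exists N.+1; apply: (omega_bound_step _ _ _ _ hA hJ (sub_adjoin A x) hP _ hNJ).
exact: adjoin_quot_iso A x hA.
Qed.

Lemma gen_subcons x (s : seq R) : gen s `<=` gen (x :: s).
Proof.
apply: gen_sub; first exact: gen_ideal.
by move=> j; have := gen_mem (x :: s) (lift ord0 j); rewrite lift0.
Qed.

(* In a noetherian ring every ideal is finitely generated: a maximal finitely
   generated subideal of A must be A itself. *)
Lemma noetherian_fg A : is_ideal A -> exists s : seq R, A = gen s.
Proof.
move=> hA; pose F B := exists2 s : seq R, B = gen s & B `<=` A.
have hF B : F B -> is_ideal B by case=> s -> _; apply: gen_ideal.
have F0 : F (gen [::]) by exists [::] => //; apply: gen_sub => // -[].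
have [_ [[s -> hsA] hmax]] := noeth_max _ hF _ F0.
exists s; apply/seteqP; split=> // x hx; apply: contrapT => hxs.
have hFx : F (gen (x :: s)).
  exists (x :: s) => //; apply: gen_sub => // -[[|j] hj] //=.
  exact: hsA (gen_mem s (Ordinal (hj : (j < size s)%N))).
apply: hxs; rewrite (hmax _ hFx (gen_subcons x s)).
exact: gen_mem (x :: s) ord0.
Qed.

(* Cancellation in I(R): if A = A U with A nonzero, then 1 lies in U.  Write
   the generators s of A as U-combinations of themselves and apply the
   determinant trick to the vector of generators. *)
Lemma ideal_cancel A U : nonzero_ideal A -> is_ideal U -> A = imul A U -> U 1.
Proof.
move=> [hA [a [a0 ha]]] hU e; have [s hs] := noetherian_fg _ hA.
have hrep (i : 'I_(size s)) : exists u : 'I_(size s) -> R,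
    (forall j, U (u j)) /\ s`_i = \sum_(j < size s) u j * s`_j.
  by apply: imul_gen => //; rewrite -hs imulC -e hs; apply: gen_mem.
have [u hu] := choice hrep.
apply: (@det_trick U _ (\matrix_(i, j) u i j) (\col_i s`_i) hU).
- by move=> i j; rewrite mxE; case: (hu i).
- apply/matrixP => i j; rewrite !mxE (proj2 (hu i)).
  by apply: eq_bigr => l _; rewrite !mxE.
- apply: contra_neq a0 => s0; move: ha; rewrite hs => -[c ->].
  apply: big1 => j _; have := congr1 (fun v : 'cV_(size s) => v j ord0) s0.
  by rewrite !mxE => ->; rewrite mulr0.
Qed.

Lemma ideal_cancel_unit A U : nonzero_ideal A -> nonzero_ideal U ->
  A = imul A U -> iunit U.
Proof.
move=> hA hU e; rewrite (ideal1_T _ hU.1 (ideal_cancel _ _ hA hU.1 e)); exact: iunitT.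
Qed.

Lemma imul_strict A B C : nonzero_ideal B -> nonzero_ideal C -> ~ iunit C ->
  A = imul B C -> A <> B.
Proof.
by move=> hB hC nC -> eB; apply/nC/(ideal_cancel_unit _ _ hB hC); rewrite {1}eB.
Qed.

Lemma not_atom_split A : nonzero_ideal A -> ~ iatom A -> ~ iunit A ->
  exists B C, [/\ nonzero_ideal B, nonzero_ideal C, A = imul B C,
                  ~ iunit B & ~ iunit C].
Proof.
move=> hA hna hnu; apply: contrapT => hno; apply: hna; do 2 split=> //.
move=> B C hB hC eA; have [|nB] := pselect (iunit B); first by left.
have [|nC] := pselect (iunit C); first by right.
by case: hno; exists B, C.
Qed.

Lemma factor_atoms A : nonzero_ideal A ->
  exists2 s, (forall u, u \in s -> iatom u) & A = iprod s.
Proof.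
case=> hA; move: A hA; apply: (noeth_ind (fun A => (exists x, x != 0 /\ A x) ->
  exists2 s, (forall u, u \in s -> iatom u) & A = iprod s)) => A hA IH hnz.
have hAnz : nonzero_ideal A by split.
have [hu|hnu] := pselect (iunit A); first by exists [::]; last exact: iunit_T.
have [ha|hna] := pselect (iatom A).
  by exists [:: A]; [move=> u; rewrite inE => /eqP ->|rewrite /= imulT].
have [B [C [hB hC eA nB nC]]] := not_atom_split _ hAnz hna hnu.
have hAB : A `<=` B by rewrite eA; apply: imul_subl; case: hB.
have hAC : A `<=` C by rewrite eA; apply: imul_subr; case: hC.
have [s1 h1 e1] := IH B hB.1 hAB (imul_strict _ _ _ hB hC nC eA) hB.2.
have eA' : A = imul C B by rewrite imulC.
have [s2 h2 e2] := IH C hC.1 hAC (imul_strict _ _ _ hC hB nB eA') hC.2.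
exists (s1 ++ s2); first by move=> u; rewrite mem_cat => /orP [/h1|/h2].
by rewrite iprod_cat -?e1 -?e2 // => u /h2 [[]].
Qed.

Lemma atoms_irredundant I n (Js : 'I_n -> set R) (Om : {set 'I_n}) :
  nonzero_ideal I -> (forall i, iatom (Js i)) ->
  I = iprod [seq Js i | i <- enum 'I_n] ->
  iprod [seq Js i | i <- enum Om] `<=` I -> Om = finset.setT.
Proof.
move=> hI hJs eI hK; have hJs' i : is_ideal (Js i) by case: (hJs i) => [[]].
set K := iprod _ in hK; set M := iprod [seq Js i | i <- enum (~: Om)].
have hMK : I = imul M K by rewrite eI (iprod_split _ _ Om).
have hKi : is_ideal K by apply: iprod_ideal => u /mapP [i _ ->].
have hIK : I = K by apply/seteqP; split=> //; rewrite {1}hMK; apply: imul_subr.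
have M1 : M 1.
  apply: (ideal_cancel _ _ hI); first by apply: iprod_ideal => u /mapP [i _ ->].
  by rewrite imulC {2}hIK -hMK.
apply/setP => mu; rewrite inE; apply: contraT => hmu.
have /(ideal1_T _ (hJs' mu)) JT : Js mu 1.
  by apply: (@iprod_sub_factor _ Js _ mu (hJs' mu) _ _ M1); rewrite mem_enum inE.
by case: (hJs mu) => _ [nU _]; case: nU; rewrite JT; apply: iunitT.
Qed.

Lemma length_le_omega_bound I N l : nonzero_ideal I -> omega_bound I N ->
  in_lengths I l -> (l <= N)%N.
Proof.
move=> hI hb [e [s [he [hs [<- eI]]]]].
rewrite (iunit_T he) imulTl in eI; last by apply: iprod_ideal => u /hs [[]].
pose Js i := tnth (in_tuple s) i.
have hJs i : iatom (Js i) by apply: hs; apply: mem_tnth.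
have eIJs : I = iprod [seq Js i | i <- enum 'I_(size s)].
  by rewrite map_tnth_enum.
have hprod : iprod [seq Js i | i <- enum 'I_(size s)] `<=` I by rewrite -eIJs.
have [Om [hOm hK]] := hb _ Js (fun i => (hJs i).1) hprod.
by rewrite (atoms_irredundant _ _ _ _ hI hJs eIJs hK) cardsT card_ord in hOm.
Qed.

Lemma ideal_monoid_is_BF : ideal_monoid_BF R.
Proof.
split; first exact: ideal_cancel_unit.
move=> A hA; split.
  have [s hs eA] := factor_atoms _ hA.
  exists (size s), setT, s; split; first exact: iunitT.
  by do 2 split=> //; rewrite imulTl -?eA //; case: hA.
have [N hNA] := omega_finite _ hA.1.
by exists N => l; apply: length_le_omega_bound.
Qed.

End Noetherian.
End IdealMonoid.

Theorem proposition2p2 (R : idomainType) (hR : noetherian R)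
    (I : set R) (hI : nonzero_ideal I) :
  (forall J P : set R, nonzero_ideal J -> I `<=` J -> prime_ideal P ->
     quot_iso J I P -> enat_le (omega' I) (enat_succ (omega' J))) /\
  omega' I <> None /\
  ((forall l, in_lengths I l -> enat_le (Some l) (omega' I)) /\
   ideal_monoid_BF R).
Proof.
have [N hN] := omega_finite hR _ hI.1.
have [m em _] := omega'_le _ _ hN.
split.
  move=> J P hJ hIJ hP hiso; case eJ: (omega' J) => [k|] //=.
  have hb := omega_bound_step _ _ _ _ hI.1 hJ.1 hIJ hP hiso (omega'_bound _ _ eJ).
  by have [m' -> hm'] := omega'_le _ _ hb.
split; first by rewrite em.
split; last exact: ideal_monoid_is_BF hR.
move=> l hl; rewrite em.
exact: length_le_omega_bound hR _ _ _ hI (omega'_bound _ _ em) hl.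
Qed.
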